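(* Let $h_1,h_2$ be real numbers. The polynomial $h(t)=1+h_1t+h_2t^2+h_1t^3+t^4$ has only real negative roots if and only if $h_2-2h_1+2\geq0$, $h_1^2-4(h_2-2)\geq0$, and $h_1\geq4$. *)

From HB Require Import structures.
From mathcomp Require Import all_boot all_order all_algebra.
From mathcomp Require Import complex.
From mathcomp Require Import reals.
Set Implicit Arguments. Unset Strict Implicit. Unset Printing Implicit Defensive.
Import Order.TTheory GRing.Theory Num.Theory.
Local Open Scope ring_scope.

Definition hpoly (R : ringType) (h1 h2 : R) : {poly R} :=
  1 + h1 *: 'X + h2 *: 'X^2 + h1 *: 'X^3 + 'X^4.

Definition only_real_negative_roots (R : rcfType) (p : {poly R}) : Prop :=
  forall z : R[i], root (map_poly (real_complex R) p) z ->
    complex.Im z = 0 /\ complex.Re z < 0.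

From HB Require Import structures.
From mathcomp Require Import all_boot all_order all_algebra.
From mathcomp Require Import complex.
From mathcomp Require Import reals.
From mathcomp Require Import ring lra.
Set Implicit Arguments.
Unset Strict Implicit.
Unset Printing Implicit Defensive.

Import Order.TTheory GRing.Theory Num.Theory.
Local Open Scope ring_scope.
Local Open Scope complex_scope.

(* h is palindromic: t^-2 h(t) = g(t + 1/t) with g(w) = w^2 + h1 w + h2 - 2, so
   h = (t^2 - w1 t + 1)(t^2 - w2 t + 1) where w1, w2 are the roots of g.  The
   roots of t^2 - w t + 1 are a pair t, 1/t with t + 1/t = w; they are real and
   negative iff w is real and w <= -2.  Hence h has only real negative roots iff
   both roots of g are real and at most -2, i.e. iff the discriminant of g is
   nonnegative, g(-2) = h2 - 2 h1 + 2 >= 0 and the vertex -h1/2 is <= -2. *)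

Definition recip_quad {R : nzRingType} (w : R) : {poly R} := 'X^2 - w *: 'X + 1.

Lemma map_hpoly (R S : nzRingType) (f : {rmorphism R -> S}) (h1 h2 : R) :
  map_poly f (hpoly h1 h2) = hpoly (f h1) (f h2).
Proof. by rewrite /hpoly !rmorphD /= !map_polyZ !map_polyXn map_polyX rmorph1. Qed.

Lemma hpoly_factor (R : comNzRingType) (h1 h2 w1 w2 : R) :
  w1 + w2 = - h1 -> w1 * w2 = h2 - 2 ->
  hpoly h1 h2 = recip_quad w1 * recip_quad w2.
Proof.
move=> sum_w prod_w.
have -> : h1 = - (w1 + w2) by rewrite sum_w opprK.
have -> : h2 = w1 * w2 + 2 by rewrite prod_w subrK.
rewrite /hpoly /recip_quad -!mul_polyC !(rmorphD, rmorphN, rmorphM) /= polyC1.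
ring.
Qed.

Lemma recip_quad_factor (R : comNzRingType) (x1 x2 : R) : x1 * x2 = 1 ->
  recip_quad (x1 + x2) = ('X - x1%:P) * ('X - x2%:P).
Proof.
move=> prod_x.
rewrite /recip_quad -mul_polyC -[1 in LHS]polyC1 -prod_x !rmorphD !rmorphM /=.
ring.
Qed.

Lemma root_recip_quad (R : idomainType) (x1 x2 z : R) : x1 * x2 = 1 ->
  root (recip_quad (x1 + x2)) z = (z == x1) || (z == x2).
Proof. by move=> prod_x; rewrite recip_quad_factor // rootM !root_XsubC. Qed.

Lemma vieta_of_sqrt (F : numFieldType) (b c r : F) : r ^+ 2 = b ^+ 2 - 4 * c ->
  exists x1 x2 : F, x1 + x2 = b /\ x1 * x2 = c.
Proof.
move=> sq_r; exists ((b + r) / 2), ((b - r) / 2); split; first by field.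
have -> : (b + r) / 2 * ((b - r) / 2) = (b ^+ 2 - r ^+ 2) / 4 by field.
by rewrite sq_r; field.
Qed.

Lemma vieta_complex (C : numClosedFieldType) (b c : C) :
  exists x1 x2 : C, x1 + x2 = b /\ x1 * x2 = c.
Proof. exact: vieta_of_sqrt (sqrtCK (b ^+ 2 - 4 * c)). Qed.

Lemma vieta_real (R : rcfType) (b c : R) : 4 * c <= b ^+ 2 ->
  exists x1 x2 : R, x1 + x2 = b /\ x1 * x2 = c.
Proof. by move=> discr_ge0; apply: vieta_of_sqrt (sqr_sqrtr _); rewrite subr_ge0. Qed.

Lemma vieta_le_iff (R : rcfType) (b c t : R) :
  (exists x1 x2 : R, [/\ x1 + x2 = b, x1 * x2 = c, x1 <= t & x2 <= t]) <->
  [/\ 0 <= b ^+ 2 - 4 * c, 0 <= t ^+ 2 - b * t + c & b <= 2 * t].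
Proof.
split=> [[x1 [x2 [<- <- le_x1 le_x2]]] | [discr_ge0 val_t_ge0 le_b]].
  split; last by lra.
    have -> : (x1 + x2) ^+ 2 - 4 * (x1 * x2) = (x1 - x2) ^+ 2 by ring.
    exact: sqr_ge0.
  have -> : t ^+ 2 - (x1 + x2) * t + x1 * x2 = (t - x1) * (t - x2) by ring.
  by apply: mulr_ge0; rewrite subr_ge0.
have le_4c : 4 * c <= b ^+ 2 by lra.
have [x1 [x2 [sum_x prod_x]]] := vieta_real le_4c.
have val_t : t ^+ 2 - b * t + c = (x1 - t) * (x2 - t) by rewrite -sum_x -prod_x; ring.
by exists x1, x2; split => //; nra.
Qed.

Section ComplexRoots.
Variable R : rcfType.

Lemma complex_real (z : R[i]) : complex.Im z = 0 -> z = (complex.Re z)%:C.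
Proof. by case: z => a b /= ->. Qed.

Lemma recip_quad_real_negP (w : R[i]) :
  (forall z, root (recip_quad w) z -> complex.Im z = 0 /\ complex.Re z < 0) <->
  exists2 s : R, w = s%:C & s <= -2.
Proof.
split=> [neg_roots | [s -> le_s]].
  have [x1 [x2 [sum_x prod_x]]] := vieta_complex w 1; subst w.
  have [Im_x1 Re_x1] : complex.Im x1 = 0 /\ complex.Re x1 < 0.
    by apply: neg_roots; rewrite root_recip_quad ?eqxx.
  have [Im_x2 Re_x2] : complex.Im x2 = 0 /\ complex.Re x2 < 0.
    by apply: neg_roots; rewrite root_recip_quad ?eqxx ?orbT.
  rewrite (complex_real Im_x1) (complex_real Im_x2) in prod_x *.
  have prod_Re : complex.Re x1 * complex.Re x2 = 1 by apply: complexI; rewrite rmorphM.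
  exists (complex.Re x1 + complex.Re x2); first by rewrite rmorphD.
  have := sqr_ge0 (complex.Re x1 - complex.Re x2); nra.
have le_4 : 4 * 1 <= s ^+ 2 by nra.
have [x1 [x2 [sum_x prod_x]]] := vieta_real le_4.
have [x1_neg x2_neg] : x1 < 0 /\ x2 < 0 by split; nra.
move=> z; rewrite -sum_x rmorphD root_recip_quad -?rmorphM ?prod_x //.
by case/orP=> /eqP ->.
Qed.
End ComplexRoots.

Lemma hpoly_roots_negP (R : rcfType) (h1 h2 : R) :
  only_real_negative_roots (hpoly h1 h2) <->
  exists s1 s2 : R, [/\ s1 + s2 = - h1, s1 * s2 = h2 - 2, s1 <= -2 & s2 <= -2].
Proof.
rewrite /only_real_negative_roots map_hpoly; split=> [neg_roots | ].
  have [w1 [w2 [sum_w prod_w]]] := vieta_complex (- h1%:C) (h2%:C - 2).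
  rewrite (hpoly_factor sum_w prod_w) in neg_roots.
  have [s1 def_w1 le_s1] : exists2 s1 : R, w1 = s1%:C & s1 <= -2.
    by apply/recip_quad_real_negP => z root_z; apply: neg_roots; rewrite rootM root_z.
  have [s2 def_w2 le_s2] : exists2 s2 : R, w2 = s2%:C & s2 <= -2.
    by apply/recip_quad_real_negP => z root_z; apply: neg_roots; rewrite rootM root_z orbT.
  exists s1, s2; split=> //; apply: complexI.
    by rewrite rmorphD rmorphN /= -def_w1 -def_w2.
  by rewrite rmorphM rmorphB /= -def_w1 -def_w2 rmorph_nat.
case=> s1 [s2 [sum_s prod_s le_s1 le_s2]].
have sum_sC : s1%:C + s2%:C = - h1%:C by rewrite -rmorphD sum_s rmorphN.
have prod_sC : s1%:C * s2%:C = h2%:C - 2 by rewrite -rmorphM prod_s rmorphB rmorph_nat.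
move=> z; rewrite (hpoly_factor sum_sC prod_sC) rootM => /orP[]; move: z.
  by apply/recip_quad_real_negP; exists s1.
by apply/recip_quad_real_negP; exists s2.
Qed.

Theorem lemma3p2p3 (R : realType) (h1 h2 : R) :
  only_real_negative_roots (hpoly h1 h2) <->
  [/\ 0 <= h2 - 2 * h1 + 2, 0 <= h1 ^+ 2 - 4 * (h2 - 2) & 4 <= h1].
Proof.
rewrite hpoly_roots_negP vieta_le_iff sqrrN.
have -> : (-2) ^+ 2 - - h1 * -2 + (h2 - 2) = h2 - 2 * h1 + 2 :> R by ring.
by split=> -[*]; split=> //; lra.
Qed.
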